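(* Let $(F,v)$ be a Krasner valued hyperfield with norm $\rho_v$, and let $w$ be a valuation on $F$ with $\mathcal{O}_w=\{x\in F: x-x\subseteq 1-1\}$ (such $w$ exists and is a Krasner valuation). Then $w$ is equivalent to the coarsening $v_{\mathrm{ig}(\rho_v)}$ of $v$ corresponding to the convex subgroup $\mathrm{ig}(\rho_v)$. In particular, $v_{\mathrm{ig}(\rho_v)}$ is a Krasner valuation.
   Context: A hyperfield is $(F,+,\cdot,0,1)$ with $+$ a multivalued operation making $(F,+,0)$ a canonical hypergroup (associative, commutative, unique inverses $-x$ with $0\in x+(-x)$, and $z\in x+y\Rightarrow y\in z+(-x)$; write $x-y:=x+(-y)$, $A+B:=\bigcup_{a\in A,b\in B}a+b$), $(F,\cdot)$ commutative with $0$ absorbing, $x(y+z)=xy+xz$, and $F\setminus\{0\}$ an abelian group with neutral $1\neq0$. Valuation on $F$: for an ordered abelian group $\Gamma$ and $\infty>\Gamma$ with $\gamma+\infty=\infty+\gamma=\infty$, a surjective map $v:F\to\Gamma\cup\{\infty\}$ with $vx=\infty\iff x=0$, $v(xy)=vx+vy$, $z\in x+y\Rightarrow vz\ge\min\{vx,vy\}$; $vF:=v(F\setminus\{0\})$, $\mathcal{O}_v:=\{x:vx\ge0\}$. Valuations $v_i:F\to\Gamma_i\cup\{\infty\}$ are equivalent if $v_2=\sigma\circ v_1$ for an order-preserving group isomorphism $\sigma:\Gamma_1\to\Gamma_2$ ($\sigma(\infty)=\infty$). An initial segment of $\Gamma$ is $\rho\subseteq\Gamma$ with $\delta\in\rho,\gamma<\delta\Rightarrow\gamma\in\rho$;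 $\rho+\gamma:=\{\delta+\gamma:\delta\in\rho\}$; ''$\alpha>\rho+\gamma$'' means $\alpha\notin\rho+\gamma$. The invariance group of $\rho$ is $\mathrm{ig}(\rho):=\{\gamma\in\Gamma:\rho+\gamma=\rho\}$; if $0\in\rho$ it is a convex subgroup of $\Gamma$ (a subgroup $\Delta$ with $\delta_1<\gamma<\delta_2$, $\delta_i\in\Delta\Rightarrow\gamma\in\Delta$). For a convex subgroup $\Delta$ of $vF$, $vF/\Delta$ is ordered by $x+\Delta\prec y+\Delta$ iff $x<y$ and $y-x\notin\Delta$, and the coarsening $v_\Delta:F\to(vF/\Delta)\cup\{\infty\}$, $x\mapsto vx+\Delta$, is a valuation on $F$. Krasner valuation: a valuation $v$ on $F$ such that (KVH1) for all $x,y\in F$ with $0\notin x+y$, $v(x+y)$ is a singleton; (KVH2) there is an initial segment $\rho_v$ of $vF$ with $0\in\rho_v$ (the norm) such that for all $x,y,z,t\in F$ with $z\in x+y$: $t\in x+y$ iff $vs>\rho_v+\min\{vx,vy\}$ for all $s\in z-t$. *)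

From Stdlib Require Import ClassicalEpsilon.

Record hyperfield := HyperField {
  hcar : Type;
  hadd : hcar -> hcar -> hcar -> Prop;  (* hadd x y t  <->  t \in x + y *)
  hneg : hcar -> hcar;
  hmul : hcar -> hcar -> hcar;
  hzero : hcar;
  hone : hcar }.

Section HF.
Variable F : hyperfield.
Local Notation T := (hcar F).

Definition is_hyperfield : Prop :=
  (forall x y : T, exists t, hadd F x y t) /\
  (forall x y z t : T, (exists u, hadd F x y u /\ hadd F u z t) <->
                       (exists u, hadd F y z u /\ hadd F x u t)) /\
  (forall x y t : T, hadd F x y t <-> hadd F y x t) /\
  (forall x t : T, hadd F x (hzero F) t <-> t = x) /\
  (forall x : T, hadd F x (hneg F x) (hzero F)) /\
  (forall x y : T, hadd F x y (hzero F) -> y = hneg F x) /\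
  (forall x y z : T, hadd F x y z -> hadd F z (hneg F x) y) /\
  (forall x y : T, hmul F x y = hmul F y x) /\
  (forall x y z : T, hmul F x (hmul F y z) = hmul F (hmul F x y) z) /\
  (forall x : T, hmul F (hone F) x = x) /\
  (forall x : T, hmul F (hzero F) x = hzero F) /\
  (forall x y z t : T, hadd F (hmul F x y) (hmul F x z) t <->
                       exists u, hadd F y z u /\ t = hmul F x u) /\
  hone F <> hzero F /\
  (forall x y : T, x <> hzero F -> y <> hzero F -> hmul F x y <> hzero F) /\
  (forall x : T, x <> hzero F -> exists y, hmul F x y = hone F).
End HF.

Record oag := OAG {
  car : Type;
  gadd : car -> car -> car;
  gopp : car -> car;
  gzero : car;
  glt : car -> car -> Prop }.

Definition is_oag (G : oag) : Prop :=
  (forall a b c : car G, gadd G a (gadd G b c) = gadd G (gadd G a b) c) /\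
  (forall a b : car G, gadd G a b = gadd G b a) /\
  (forall a : car G, gadd G a (gzero G) = a) /\
  (forall a : car G, gadd G a (gopp G a) = gzero G) /\
  (forall a : car G, ~ glt G a a) /\
  (forall a b c : car G, glt G a b -> glt G b c -> glt G a c) /\
  (forall a b : car G, glt G a b \/ a = b \/ glt G b a) /\
  (forall a b c : car G, glt G a b -> glt G (gadd G a c) (gadd G b c)).

(* Gamma \cup {oo} is modelled as option (car G), None = oo. *)
Definition olt (G : oag) (a b : option (car G)) : Prop :=
  match a, b with
  | Some a, Some b => glt G a b
  | Some _, None => True
  | None, _ => False
  end.
Definition ole (G : oag) (a b : option (car G)) : Prop := olt G a b \/ a = b.
Definition oadd (G : oag) (a b : option (car G)) : option (car G) :=
  match a, b with
  | Some a, Some b => Some (gadd G a b)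
  | _, _ => None
  end.
Definition omin (G : oag) (a b : option (car G)) : option (car G) :=
  match a, b with
  | Some a', Some b' => Some (if excluded_middle_informative (glt G b' a') then b' else a')
  | Some _, None => a
  | None, _ => b
  end.

Section Val.
Variables (F : hyperfield) (G : oag).

Definition valuation (v : hcar F -> option (car G)) : Prop :=
  (forall o : option (car G), exists x, v x = o) /\
  (forall x, v x = None <-> x = hzero F) /\
  (forall x y, v (hmul F x y) = oadd G (v x) (v y)) /\
  (forall x y z, hadd F x y z -> ole G (omin G (v x) (v y)) (v z)).

(* initial segment of vF (= the whole of G, since v is surjective) containing 0 *)
Definition initial_segment (rho : car G -> Prop) : Prop :=
  forall d g : car G, rho d -> glt G g d -> rho g.

Definition seg_shift (rho : car G -> Prop) (g : car G) : car G -> Prop :=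
  fun a => exists d, rho d /\ a = gadd G d g.

Definition ig (rho : car G -> Prop) : car G -> Prop :=
  fun g => forall a, seg_shift rho g a <-> rho a.

(* "alpha > rho + gamma" for alpha in G \cup {oo}, gamma in G: alpha \notin rho + gamma *)
Definition above_seg (rho : car G -> Prop) (alpha : option (car G)) (g : car G) : Prop :=
  match alpha with
  | None => True
  | Some a => ~ seg_shift rho g a
  end.

Definition KVH1 (v : hcar F -> option (car G)) : Prop :=
  forall x y, ~ hadd F x y (hzero F) ->
    exists g, forall t, hadd F x y t -> v t = g.

Definition krasner_norm (v : hcar F -> option (car G)) (rho : car G -> Prop) : Prop :=
  initial_segment rho /\ rho (gzero G) /\
  forall x y z t : hcar F, (x <> hzero F \/ y <> hzero F) -> hadd F x y z ->
    forall m, omin G (v x) (v y) = Some m ->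
    (hadd F x y t <-> forall s, hadd F z (hneg F t) s -> above_seg rho (v s) m).

Definition krasner_valuation_with_norm (v : hcar F -> option (car G)) (rho : car G -> Prop) :=
  valuation v /\ KVH1 v /\ krasner_norm v rho.

Definition krasner_valuation (v : hcar F -> option (car G)) : Prop :=
  valuation v /\ KVH1 v /\ exists rho, krasner_norm v rho.
End Val.

Definition val_equiv (F : hyperfield) (G1 G2 : oag)
  (v1 : hcar F -> option (car G1)) (v2 : hcar F -> option (car G2)) : Prop :=
  exists sigma : car G1 -> car G2,
    (forall a b, sigma a = sigma b -> a = b) /\
    (forall c, exists a, sigma a = c) /\
    (forall a b, sigma (gadd G1 a b) = gadd G2 (sigma a) (sigma b)) /\
    (forall a b, glt G1 a b <-> glt G2 (sigma a) (sigma b)) /\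
    (forall x, v2 x = option_map sigma (v1 x)).

Section Quot.
Variables (G : oag) (Delta : car G -> Prop).

Definition coset_of (g : car G) : car G -> Prop := fun y => Delta (gadd G y (gopp G g)).

Definition qcar : Type := {S : car G -> Prop | exists g, S = coset_of g}.

Definition qmk (g : car G) : qcar := exist _ (coset_of g) (ex_intro _ g eq_refl).

Definition qrep (S : qcar) : car G :=
  proj1_sig (constructive_indefinite_description _ (proj2_sig S)).

Definition quot_oag : oag := {|
  car := qcar;
  gadd := fun S T => qmk (gadd G (qrep S) (qrep T));
  gopp := fun S => qmk (gopp G (qrep S));
  gzero := qmk (gzero G);
  glt := fun S T => glt G (qrep S) (qrep T) /\
                    ~ Delta (gadd G (qrep T) (gopp G (qrep S))) |}.
End Quot.

Definition coarsening (F : hyperfield) (G : oag) (Delta : car G -> Prop)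
  (v : hcar F -> option (car G)) : hcar F -> option (car (quot_oag G Delta)) :=
  fun x => option_map (qmk G Delta) (v x).

(* Say that g stabilises ρ downwards when ρ − g ⊆ ρ.  The proof rests on three facts.
   - For x ≠ 0, axiom KVH2 applied to 0 ∈ x − x gives x − x = {t | vt > ρ + vx}; hence
     x − x ⊆ 1 − 1 iff vx stabilises ρ downwards, and so w y ≤ w x iff vx − vy stabilises
     ρ downwards.  As ig(ρ) consists of the g such that both g and −g stabilise ρ
     downwards, w x = w y iff vx ≡ vy modulo ig(ρ), and w x < w y iff vx + ig(ρ) is below
     vy + ig(ρ).  So σ(w x) := vx + ig(ρ) is an order isomorphism wF → vF/ig(ρ) with
     v_Δ = σ ∘ w.
   - For any convex subgroup Δ, the order and addition of vF/Δ can be computed on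
     representatives, so the coarsening v_Δ is again a valuation, and it inherits KVH1.
   - If moreover ρ is a union of Δ-cosets (as it is for Δ = ig(ρ)), the image of ρ in
     vF/Δ is a norm for v_Δ, so v_Δ is a Krasner valuation. *)

From Pilot Require Import Defs.
From Stdlib Require Import ClassicalEpsilon Classical FunctionalExtensionality
  PropExtensionality ProofIrrelevance.

Section OrderedGroup.
Context {G : oag} (HG : is_oag G).
Local Infix "⊕" := (gadd G) (at level 50, left associativity).
Local Notation "⊝ a" := (gopp G a) (at level 35, right associativity).
Local Notation z0 := (gzero G).

Lemma addA a b c : a ⊕ (b ⊕ c) = a ⊕ b ⊕ c.
Proof. apply HG. Qed.
Lemma addC a b : a ⊕ b = b ⊕ a.
Proof. apply HG. Qed.
Lemma addr0 a : a ⊕ z0 = a.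
Proof. apply HG. Qed.
Lemma addrN a : a ⊕ ⊝a = z0.
Proof. apply HG. Qed.
Lemma ltirr a : ~ glt G a a.
Proof. apply HG. Qed.
Lemma lt_trans a b c : glt G a b -> glt G b c -> glt G a c.
Proof. apply HG. Qed.
Lemma lt_total a b : glt G a b \/ a = b \/ glt G b a.
Proof. apply HG. Qed.
Lemma lt_addr a b c : glt G a b -> glt G (a ⊕ c) (b ⊕ c).
Proof. apply HG. Qed.

Lemma add0r a : z0 ⊕ a = a.
Proof. rewrite addC; apply addr0. Qed.
Lemma addNr a : ⊝a ⊕ a = z0.
Proof. rewrite addC; apply addrN. Qed.
Lemma addK a b : a ⊕ b ⊕ ⊝b = a.
Proof. rewrite <- addA, addrN, addr0. reflexivity. Qed.
Lemma addNK a b : a ⊕ ⊝b ⊕ b = a.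
Proof. rewrite <- addA, addNr, addr0. reflexivity. Qed.
Lemma addAC a b c : a ⊕ b ⊕ c = a ⊕ c ⊕ b.
Proof. rewrite <- !addA, (addC b c). reflexivity. Qed.
Lemma addCA a b c : a ⊕ (b ⊕ c) = b ⊕ (a ⊕ c).
Proof. rewrite !addA, (addC a b). reflexivity. Qed.
Lemma addACA a b c d : (a ⊕ b) ⊕ (c ⊕ d) = (a ⊕ c) ⊕ (b ⊕ d).
Proof. rewrite !addA, (addAC a b c). reflexivity. Qed.
Lemma addIr a b c : a ⊕ c = b ⊕ c -> a = b.
Proof. intro E. rewrite <- (addK a c), E, addK. reflexivity. Qed.
Lemma opp_uniq a b : a ⊕ b = z0 -> b = ⊝a.
Proof. intro E. rewrite <- (add0r b), <- (addNr a), <- addA, E, addr0. reflexivity. Qed.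
Lemma oppK a : ⊝⊝a = a.
Proof. symmetry; apply opp_uniq, addNr. Qed.
Lemma opp0 : ⊝z0 = z0.
Proof. symmetry; apply opp_uniq, addr0. Qed.
Lemma oppD a b : ⊝(a ⊕ b) = ⊝a ⊕ ⊝b.
Proof. symmetry; apply opp_uniq. rewrite addACA, !addrN, addr0. reflexivity. Qed.
Lemma opp_sub a b : ⊝(a ⊕ ⊝b) = b ⊕ ⊝a.
Proof. rewrite oppD, oppK, addC. reflexivity. Qed.
Lemma sub0 a : a ⊕ ⊝z0 = a.
Proof. rewrite opp0, addr0. reflexivity. Qed.
Lemma sub_trans a b c : (a ⊕ ⊝b) ⊕ (b ⊕ ⊝c) = a ⊕ ⊝c.
Proof. rewrite <- addA, (addA (⊝b)), addNr, add0r. reflexivity. Qed.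
Lemma sub_ACA a b c d : (a ⊕ ⊝b) ⊕ ⊝(c ⊕ ⊝d) = (a ⊕ ⊝c) ⊕ ⊝(b ⊕ ⊝d).
Proof. rewrite !oppD, addACA. reflexivity. Qed.
Lemma subKr a b : a ⊕ ⊝(a ⊕ ⊝b) = b.
Proof. rewrite opp_sub, addCA, addrN, addr0. reflexivity. Qed.

Lemma lt_addl a b c : glt G a b -> glt G (c ⊕ a) (c ⊕ b).
Proof. rewrite !(addC c); apply lt_addr. Qed.
Lemma lt_asym a b : glt G a b -> ~ glt G b a.
Proof. intros h1 h2; exact (ltirr a (lt_trans _ _ _ h1 h2)). Qed.
Lemma lt0_sub a b : glt G z0 (a ⊕ ⊝b) <-> glt G b a.
Proof.
  split; intro h.
  - pose proof (lt_addr _ _ b h) as e. rewrite add0r, addNK in e. exact e.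
  - pose proof (lt_addr _ _ (⊝b) h) as e. rewrite addrN in e. exact e.
Qed.
Lemma lt_sub0 a b : glt G (a ⊕ ⊝b) z0 <-> glt G a b.
Proof.
  split; intro h.
  - pose proof (lt_addr _ _ b h) as e. rewrite add0r, addNK in e. exact e.
  - pose proof (lt_addr _ _ (⊝b) h) as e. rewrite addrN in e. exact e.
Qed.
Lemma lt_opp a b : glt G a b -> glt G (⊝b) (⊝a).
Proof. intro h. apply lt0_sub. rewrite oppK, addC. apply lt0_sub, h. Qed.

Lemma double_eq0 g : g ⊕ g = z0 -> g = z0.
Proof.
  intro e. destruct (lt_total g z0) as [h|[h|h]]; [exfalso| exact h |exfalso].
  - pose proof (lt_addr _ _ g h) as h2. rewrite add0r, e in h2. exact (lt_asym _ _ h h2).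
  - pose proof (lt_addr _ _ g h) as h2. rewrite add0r, e in h2. exact (lt_asym _ _ h h2).
Qed.

Lemma ole_Some a b : ole G (Some a) (Some b) <-> glt G a b \/ a = b.
Proof. unfold ole; simpl. split; intros [h|h]; auto; [injection h|subst]; auto. Qed.
Lemma ole_sub p q : ole G (Some q) (Some p) <-> ole G (Some z0) (Some (p ⊕ ⊝q)).
Proof.
  rewrite !ole_Some, lt0_sub. split; intros [h|h]; auto; right.
  - subst. symmetry; apply addrN.
  - rewrite <- (addNK p q), <- h, add0r. reflexivity.
Qed.
Lemma lt_iff_not_ole a b : glt G a b <-> ~ ole G (Some b) (Some a).
Proof.
  rewrite ole_Some. split.
  - intros h [h'|h']; [exact (lt_asym _ _ h h')| subst; exact (ltirr _ h)].
  - intro hn. destruct (lt_total a b) as [h|[h|h]]; [exact h| |]; exfalso; auto.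
Qed.
Lemma ole_antisym a b : ole G a b -> ole G b a -> a = b.
Proof.
  unfold ole. intros [h1|h1] [h2|h2]; auto.
  destruct a as [a|], b as [b|]; simpl in *; try contradiction.
  exfalso; exact (lt_asym _ _ h1 h2).
Qed.
Lemma omin_same g : omin G (Some g) (Some g) = Some g.
Proof. unfold omin. destruct (excluded_middle_informative _); reflexivity. Qed.
End OrderedGroup.

Section Hyperfield.
Context {F : hyperfield} (HF : is_hyperfield F).
Local Notation "0" := (hzero F).
Local Notation "1" := (hone F).
Local Infix "*" := (hmul F).

Lemma h_comm x y t : hadd F x y t <-> hadd F y x t.
Proof. destruct HF as (A1&A2&A3&A4&A5&A6&A7&A8&A9&A10&A11&A12&A13&A14&A15); apply A3. Qed.
Lemma h_zero x t : hadd F x 0 t <-> t = x.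
Proof. destruct HF as (A1&A2&A3&A4&A5&A6&A7&A8&A9&A10&A11&A12&A13&A14&A15); apply A4. Qed.
Lemma h_inv x : hadd F x (hneg F x) 0.
Proof. destruct HF as (A1&A2&A3&A4&A5&A6&A7&A8&A9&A10&A11&A12&A13&A14&A15); apply A5. Qed.
Lemma h_inv_uniq x y : hadd F x y 0 -> y = hneg F x.
Proof. destruct HF as (A1&A2&A3&A4&A5&A6&A7&A8&A9&A10&A11&A12&A13&A14&A15); apply A6. Qed.
Lemma m_comm x y : x * y = y * x.
Proof. destruct HF as (A1&A2&A3&A4&A5&A6&A7&A8&A9&A10&A11&A12&A13&A14&A15); apply A8. Qed.
Lemma m_one x : 1 * x = x.
Proof. destruct HF as (A1&A2&A3&A4&A5&A6&A7&A8&A9&A10&A11&A12&A13&A14&A15); apply A10. Qed.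
Lemma m_zero x : 0 * x = 0.
Proof. destruct HF as (A1&A2&A3&A4&A5&A6&A7&A8&A9&A10&A11&A12&A13&A14&A15); apply A11. Qed.
Lemma h_distr x y z t : hadd F (x * y) (x * z) t <-> exists u, hadd F y z u /\ t = x * u.
Proof. destruct HF as (A1&A2&A3&A4&A5&A6&A7&A8&A9&A10&A11&A12&A13&A14&A15); apply A12. Qed.
Lemma one_nz : 1 <> 0.
Proof. destruct HF as (A1&A2&A3&A4&A5&A6&A7&A8&A9&A10&A11&A12&A13&A14&A15); apply A13. Qed.
Lemma m_inv x : x <> 0 -> exists y, x * y = 1.
Proof. destruct HF as (A1&A2&A3&A4&A5&A6&A7&A8&A9&A10&A11&A12&A13&A14&A15); apply A15. Qed.

Lemma h_zero_l y s : hadd F 0 y s <-> s = y.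
Proof. rewrite h_comm. apply h_zero. Qed.
Lemma mul0r x : x * 0 = 0.
Proof. rewrite m_comm. apply m_zero. Qed.
Lemma mulr1 x : x * 1 = x.
Proof. rewrite m_comm. apply m_one. Qed.
(* −x = x·(−1), by distributivity applied to 0 ∈ 1 − 1. *)
Lemma mul_neg1 x : x * hneg F 1 = hneg F x.
Proof.
  apply h_inv_uniq. pose proof (proj2 (h_distr x 1 (hneg F 1) 0)) as h.
  rewrite mulr1 in h. apply h. exists 0. split; [apply h_inv| symmetry; apply mul0r].
Qed.
Lemma neg1_sq : hneg F 1 * hneg F 1 = 1.
Proof.
  rewrite mul_neg1. symmetry; apply h_inv_uniq, h_comm, h_inv.
Qed.
Lemma neg1_nz : hneg F 1 <> 0.
Proof.
  intro e. pose proof (h_inv 1) as h. rewrite e, h_zero in h.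
  apply one_nz; symmetry; exact h.
Qed.
End Hyperfield.

Section Valuation.
Context {F : hyperfield} (HF : is_hyperfield F) {K : oag} (HK : is_oag K)
  {u : hcar F -> option (car K)} (Hu : valuation F K u).

Lemma val_surj o : exists x, u x = o.
Proof. apply Hu. Qed.
Lemma val_None x : u x = None <-> x = hzero F.
Proof. apply Hu. Qed.
Lemma val_mul x y : u (hmul F x y) = oadd K (u x) (u y).
Proof. apply Hu. Qed.
Lemma val_ultra x y z : hadd F x y z -> ole K (omin K (u x) (u y)) (u z).
Proof. apply Hu. Qed.

Lemma val0 : u (hzero F) = None.
Proof. apply val_None; reflexivity. Qed.
Lemma val_Some x : x <> hzero F -> exists g, u x = Some g.
Proof. intro h. destruct (u x) as [g|] eqn:E; eauto. apply val_None in E. contradiction. Qed.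
Lemma val_Some_nz x g : u x = Some g -> x <> hzero F.
Proof. intros e h. subst. rewrite val0 in e. discriminate. Qed.

(* u 1 = u(−1) = 0, since 1 · 1 = 1 = (−1)(−1); hence u(−x) = u x. *)
Lemma val_one : u (hone F) = Some (gzero K).
Proof.
  destruct (val_Some _ (one_nz HF)) as [g hg].
  pose proof (val_mul (hone F) (hone F)) as e. rewrite (m_one HF), hg in e.
  injection e as e. rewrite hg. f_equal.
  apply (addIr HK _ _ g). rewrite (add0r HK). auto.
Qed.
Lemma val_neg_one : u (hneg F (hone F)) = Some (gzero K).
Proof.
  destruct (val_Some _ (neg1_nz HF)) as [g hg].
  pose proof (val_mul (hneg F (hone F)) (hneg F (hone F))) as e.
  rewrite (neg1_sq HF), val_one, hg in e. injection e as e.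
  rewrite hg. f_equal. apply (double_eq0 HK). auto.
Qed.
Lemma val_neg x : u (hneg F x) = u x.
Proof.
  rewrite <- (mul_neg1 HF), val_mul, val_neg_one.
  destruct (u x); simpl; [rewrite (addr0 HK)|]; reflexivity.
Qed.
Lemma val_inv y y' b : u y = Some b -> hmul F y y' = hone F -> u y' = Some (gopp K b).
Proof.
  intros hb e.
  assert (hn : y' <> hzero F).
  { intro h; subst. rewrite (mul0r HF) in e. apply (one_nz HF); symmetry; exact e. }
  destruct (val_Some _ hn) as [g hg]. pose proof (val_mul y y') as m.
  rewrite e, val_one, hb, hg in m. injection m as m. rewrite hg. f_equal.
  apply (opp_uniq HK). auto.
Qed.
End Valuation.

Lemma seg_shift_iff {G : oag} (HG : is_oag G) (rho : car G -> Prop) g a :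
  seg_shift G rho g a <-> rho (gadd G a (gopp G g)).
Proof.
  split.
  - intros [d [hd ->]]. rewrite (addK HG). exact hd.
  - intro h. exists (gadd G a (gopp G g)). split; [exact h| rewrite (addNK HG); reflexivity].
Qed.

Definition convex_subgroup (G : oag) (Delta : car G -> Prop) : Prop :=
  Delta (gzero G) /\
  (forall g, Delta g -> Delta (gopp G g)) /\
  (forall a b, Delta a -> Delta b -> Delta (gadd G a b)) /\
  (forall d1 g d2, Delta d1 -> Delta d2 -> glt G d1 g -> glt G g d2 -> Delta g).

Section ConvexQuotient.
Context {G : oag} (HG : is_oag G) {Delta : car G -> Prop} (HDelta : convex_subgroup G Delta).
Local Infix "⊕" := (gadd G) (at level 50, left associativity).
Local Notation "⊝ a" := (gopp G a) (at level 35, right associativity).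
Local Notation z0 := (gzero G).
Let Delta0 : Delta z0 := proj1 HDelta.
Let DeltaN : forall g, Delta g -> Delta (⊝g) := proj1 (proj2 HDelta).
Let DeltaD : forall a b, Delta a -> Delta b -> Delta (a ⊕ b) := proj1 (proj2 (proj2 HDelta)).
Let Delta_convex :
  forall d1 g d2, Delta d1 -> Delta d2 -> glt G d1 g -> glt G g d2 -> Delta g :=
  proj2 (proj2 (proj2 HDelta)).

Definition cong (a b : car G) : Prop := Delta (a ⊕ ⊝b).

Lemma cong_refl a : cong a a.
Proof. unfold cong. rewrite (addrN HG). exact Delta0. Qed.
Lemma cong_sym a b : cong a b -> cong b a.
Proof. unfold cong. rewrite <- (opp_sub HG a b). apply DeltaN. Qed.
Lemma cong_trans a b c : cong a b -> cong b c -> cong a c.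
Proof. unfold cong. rewrite <- (sub_trans HG a b c). apply DeltaD. Qed.

Local Notation Q := (quot_oag G Delta).
Local Notation qmk := (qmk G Delta).
Local Notation qrep := (qrep G Delta).

Lemma qmk_eq a b : qmk a = qmk b <-> cong a b.
Proof.
  split.
  - intro e. pose proof (f_equal (@proj1_sig _ _) e) as e'. simpl in e'.
    change (coset_of G Delta b a). rewrite <- e'. apply cong_refl.
  - intro e. apply eq_sig_hprop; [intros; apply proof_irrelevance|]. simpl.
    apply functional_extensionality. intro y. apply propositional_extensionality.
    split; intro h; [exact (cong_trans _ _ _ h e)| exact (cong_trans _ _ _ h (cong_sym _ _ e))].
Qed.

Lemma qmk_qrep S : qmk (qrep S) = S.
Proof.
  apply eq_sig_hprop; [intros; apply proof_irrelevance|]. simpl.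
  unfold Defs.qrep. destruct (constructive_indefinite_description _ _) as [g hg].
  simpl. symmetry; exact hg.
Qed.

Lemma qrep_qmk a : cong (qrep (qmk a)) a.
Proof. apply qmk_eq. apply qmk_qrep. Qed.

Lemma qadd_qmk a b : gadd Q (qmk a) (qmk b) = qmk (a ⊕ b).
Proof.
  apply qmk_eq. unfold cong. rewrite (oppD HG), (addACA HG). apply DeltaD; apply qrep_qmk.
Qed.

Lemma Delta_below d e : Delta e -> glt G z0 d -> glt G d e \/ d = e -> Delta d.
Proof. intros he hd [h|h]; [exact (Delta_convex _ _ _ Delta0 he hd h)| subst; exact he]. Qed.

(* The order of vF/Δ does not depend on the chosen representatives. *)
Lemma cong_lt r a s b :
  cong r a -> cong s b -> glt G a b -> ~ Delta (b ⊕ ⊝a) -> glt G r s.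
Proof.
  intros hra hsb hab hd. apply NNPP. intro hrs.
  set (y := s ⊕ ⊝r). set (e := (b ⊕ ⊝a) ⊕ ⊝y).
  assert (he : Delta e).
  { unfold e, y. rewrite (sub_ACA HG). apply DeltaD; [apply cong_sym, hsb|].
    apply DeltaN, cong_sym, hra. }
  assert (hy : glt G y z0 \/ y = z0).
  { unfold y. rewrite (lt_sub0 HG).
    destruct (lt_total HG r s) as [h|[h|h]]; [contradiction| |auto].
    right; subst; apply (addrN HG). }
  apply hd, (Delta_below _ e he); [apply (lt0_sub HG), hab|].
  replace (b ⊕ ⊝a) with (e ⊕ y) by (unfold e; apply (addNK HG)).
  destruct hy as [hy|hy].
  - left. rewrite <- (addr0 HG e) at 2. apply (lt_addl HG), hy.
  - right. rewrite hy. apply (addr0 HG).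
Qed.

Lemma cong_notDelta r a s b :
  cong r a -> cong s b -> ~ Delta (b ⊕ ⊝a) -> ~ Delta (s ⊕ ⊝r).
Proof.
  intros hra hsb hd hsr. apply hd.
  rewrite <- (subKr HG (s ⊕ ⊝r) (b ⊕ ⊝a)), (sub_ACA HG s r b a).
  apply DeltaD; [exact hsr|]. apply DeltaN, DeltaD; [exact hsb| apply DeltaN, hra].
Qed.

Lemma qlt_qmk a b : glt Q (qmk a) (qmk b) <-> glt G a b /\ ~ Delta (b ⊕ ⊝a).
Proof.
  change (glt G (qrep (qmk a)) (qrep (qmk b)) /\ ~ Delta (qrep (qmk b) ⊕ ⊝ qrep (qmk a))
          <-> glt G a b /\ ~ Delta (b ⊕ ⊝a)).
  pose proof (qrep_qmk a) as ha. pose proof (qrep_qmk b) as hb.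
  split; intros [hlt hd].
  - split; [exact (cong_lt _ _ _ _ (cong_sym _ _ ha) (cong_sym _ _ hb) hlt hd)|].
    exact (cong_notDelta _ _ _ _ (cong_sym _ _ ha) (cong_sym _ _ hb) hd).
  - split; [exact (cong_lt _ _ _ _ ha hb hlt hd)| exact (cong_notDelta _ _ _ _ ha hb hd)].
Qed.

Lemma omin_qmk a b :
  omin Q (option_map qmk a) (option_map qmk b) = option_map qmk (omin G a b).
Proof.
  destruct a as [a|], b as [b|]; cbv beta iota delta [omin option_map]; try reflexivity.
  f_equal.
  destruct (excluded_middle_informative (glt Q (qmk b) (qmk a))) as [h1|h1];
  destruct (excluded_middle_informative (glt G b a)) as [h2|h2]; try reflexivity.
  - destruct (proj1 (qlt_qmk b a) h1) as [hba _]. contradiction.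
  - apply qmk_eq. apply NNPP. intro hn. apply h1, qlt_qmk. auto.
Qed.

Lemma ole_qmk a b : ole G a b -> ole Q (option_map qmk a) (option_map qmk b).
Proof.
  intros [h|h]; [|subst; right; reflexivity].
  destruct a as [a|], b as [b|]; simpl in h; try contradiction; [|left; exact Logic.I].
  destruct (classic (Delta (b ⊕ ⊝a))) as [hi|hi].
  - right. simpl. f_equal. apply qmk_eq, cong_sym, hi.
  - left. exact (proj2 (qlt_qmk a b) (conj h hi)).
Qed.

Section Coarsening.
Context {F : hyperfield} {v : hcar F -> option (car G)}.
Local Notation vD := (coarsening F G Delta v).

Lemma coarsening_valuation : valuation F G v -> valuation F Q vD.
Proof.
  intro Hv. unfold coarsening. split; [|split; [|split]].
  - intros [S|].
    + destruct (val_surj Hv (Some (qrep S))) as [x hx]. exists x.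
      rewrite hx. simpl. rewrite qmk_qrep. reflexivity.
    + exists (hzero F). rewrite (val0 Hv). reflexivity.
  - intro x. rewrite <- (val_None Hv x). destruct (v x); simpl; split; congruence.
  - intros x y. rewrite (val_mul Hv).
    destruct (v x) as [a|], (v y) as [b|]; cbv beta iota delta [oadd option_map]; try reflexivity.
    rewrite qadd_qmk. reflexivity.
  - intros x y z hz. rewrite omin_qmk. apply ole_qmk, (val_ultra Hv _ _ _ hz).
Qed.

Lemma coarsening_KVH1 : KVH1 F G v -> KVH1 F Q vD.
Proof.
  intros H1 x y hn. destruct (H1 x y hn) as [g hg].
  exists (option_map qmk g). intros t ht. unfold coarsening. rewrite (hg t ht). reflexivity.
Qed.

(* If ρ is a union of Δ-cosets, its image ρ/Δ is a norm for v_Δ whenever ρ is one for v. *)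
Context (rho : car G -> Prop) (rho_cong : forall a b, cong a b -> rho a -> rho b).

Definition quot_seg (S : car Q) : Prop := rho (qrep S).

Lemma quot_seg_shift m a : seg_shift Q quot_seg (qmk m) (qmk a) <-> rho (a ⊕ ⊝m).
Proof.
  split.
  - intros [D [hD e]]. rewrite <- (qmk_qrep D), qadd_qmk in e. apply qmk_eq in e.
    apply (rho_cong (qrep D)); [|exact hD].
    apply cong_sym in e. unfold cong. rewrite (opp_sub HG), (addA HG). exact e.
  - intro h. exists (qmk (a ⊕ ⊝m)). split.
    + apply (rho_cong (a ⊕ ⊝m)); [apply cong_sym, qrep_qmk| exact h].
    + rewrite qadd_qmk, (addNK HG). reflexivity.
Qed.

Lemma above_qmk o m :
  above_seg G rho o m <-> above_seg Q quot_seg (option_map qmk o) (qmk m).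
Proof.
  destruct o as [a|]; [|simpl; tauto].
  change (~ seg_shift G rho m a <-> ~ seg_shift Q quot_seg (qmk m) (qmk a)).
  rewrite (seg_shift_iff HG), quot_seg_shift. reflexivity.
Qed.

Lemma coarsening_krasner_norm : krasner_norm F G v rho -> krasner_norm F Q vD quot_seg.
Proof.
  intros (Hinit & Hrho0 & HK2). split; [|split].
  - intros D T hD [hlt _]. exact (Hinit _ _ hD hlt).
  - apply (rho_cong z0); [apply cong_sym, qrep_qmk| exact Hrho0].
  - intros x y z t hne hz M hM. unfold coarsening in hM. rewrite omin_qmk in hM.
    destruct (omin G (v x) (v y)) as [m|] eqn:Em; [|discriminate].
    injection hM as <-. rewrite (HK2 x y z t hne hz m Em).
    split; intros h s hs; apply above_qmk, h, hs.
Qed.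
End Coarsening.
End ConvexQuotient.
Arguments cong {G} Delta a b.
Arguments quot_seg {G} Delta rho S.

Section InvarianceGroup.
Context {G : oag} (HG : is_oag G) (rho : car G -> Prop) (rho_init : initial_segment G rho).
Local Infix "⊕" := (gadd G) (at level 50, left associativity).
Local Notation "⊝ a" := (gopp G a) (at level 35, right associativity).
Local Notation z0 := (gzero G).

Definition sub_stable (g : car G) : Prop := forall c, rho c -> rho (c ⊕ ⊝g).

Lemma ig_iff g : ig G rho g <-> forall c, rho (c ⊕ ⊝g) <-> rho c.
Proof.
  unfold ig. split; intros h c.
  - rewrite <- (seg_shift_iff HG); apply h.
  - rewrite (seg_shift_iff HG); apply h.
Qed.

Lemma ig_sub_stable g : ig G rho g <-> sub_stable g /\ sub_stable (⊝g).
Proof.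
  rewrite ig_iff. split.
  - intro h. split; intros c hc.
    + apply h, hc.
    + rewrite (oppK HG), <- (h (c ⊕ g)), (addK HG). exact hc.
  - intros [h1 h2] c. split; intro hc; [|apply h1, hc].
    pose proof (h2 _ hc) as e. rewrite (oppK HG), (addNK HG) in e. exact e.
Qed.

Lemma sub_stable_add a b : sub_stable a -> sub_stable b -> sub_stable (a ⊕ b).
Proof. intros ha hb c hc. rewrite (oppD HG), (addA HG). apply hb, ha, hc. Qed.

(* Since ρ is an initial segment, stabilising ρ downwards is an upward closed property. *)
Lemma sub_stable_mono g g' : sub_stable g -> glt G g g' -> sub_stable g'.
Proof.
  intros hg hlt c hc. apply (rho_init (c ⊕ ⊝g)); [apply hg, hc|].
  apply (lt_addl HG), (lt_opp HG), hlt.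
Qed.

Lemma sub_stable_nonneg g : ~ glt G g z0 -> sub_stable g.
Proof.
  intro h. assert (h0 : sub_stable z0) by (intros c hc; rewrite (sub0 HG); exact hc).
  destruct (lt_total HG g z0) as [h1|[h1|h1]]; [contradiction| subst; exact h0|].
  exact (sub_stable_mono _ _ h0 h1).
Qed.

Lemma ig0 : ig G rho z0.
Proof.
  apply ig_sub_stable. split; apply sub_stable_nonneg.
  - apply (ltirr HG).
  - rewrite (opp0 HG). apply (ltirr HG).
Qed.
Lemma igN g : ig G rho g -> ig G rho (⊝g).
Proof. rewrite !ig_sub_stable, (oppK HG). tauto. Qed.
Lemma igD a b : ig G rho a -> ig G rho b -> ig G rho (a ⊕ b).
Proof.
  rewrite !ig_sub_stable, (oppD HG). intros [] []. split; apply sub_stable_add; assumption.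
Qed.
Lemma ig_convex d1 g d2 :
  ig G rho d1 -> ig G rho d2 -> glt G d1 g -> glt G g d2 -> ig G rho g.
Proof.
  rewrite !ig_sub_stable. intros [h1 _] [_ h2] hl hr. split.
  - exact (sub_stable_mono _ _ h1 hl).
  - exact (sub_stable_mono _ _ h2 (lt_opp HG _ _ hr)).
Qed.

Lemma ig_convex_subgroup : convex_subgroup G (ig G rho).
Proof. split; [exact ig0| split; [exact igN| split; [exact igD| exact ig_convex]]]. Qed.

Lemma ig_rho_cong a b : cong (ig G rho) a b -> rho a -> rho b.
Proof.
  intros e ha. unfold cong in e. rewrite ig_iff in e.
  apply (proj2 (e a)) in ha. rewrite (subKr HG) in ha. exact ha.
Qed.

(* The strict order of vF/ig(ρ), read on representatives. *)
Lemma ig_lt_iff a b : glt G a b /\ ~ ig G rho (b ⊕ ⊝a) <-> ~ sub_stable (a ⊕ ⊝b).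
Proof.
  rewrite <- (opp_sub HG a b), ig_sub_stable, (oppK HG). split.
  - intros [hab h] hs. apply h. split; [|exact hs].
    apply sub_stable_nonneg, (lt_asym HG).
    rewrite (opp_sub HG). apply (lt0_sub HG), hab.
  - intro hn. split; [|tauto].
    apply (lt_sub0 HG). apply NNPP. intro h. apply hn, sub_stable_nonneg, h.
Qed.
End InvarianceGroup.

Section Comparison.
Variables (F : hyperfield) (HF : is_hyperfield F) (G : oag) (HG : is_oag G)
  (v : hcar F -> option (car G)) (rho : car G -> Prop).
Hypothesis Hv : krasner_valuation_with_norm F G v rho.
Variables (H : oag) (HH : is_oag H) (w : hcar F -> option (car H)).
Hypothesis Hw : valuation F H w.
Hypothesis HOw : forall x : hcar F,
  ole H (Some (gzero H)) (w x) <->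
  (forall s, hadd F x (hneg F x) s -> hadd F (hone F) (hneg F (hone F)) s).

Local Infix "⊕" := (gadd G) (at level 50, left associativity).
Local Notation "⊝ a" := (gopp G a) (at level 35, right associativity).
Local Notation z0 := (gzero G).
Local Notation Delta := (ig G rho).
Local Notation Q := (quot_oag G Delta).
Local Notation qmk := (qmk G Delta).
Local Notation vD := (coarsening F G Delta v).

Let v_val : valuation F G v := proj1 Hv.
Let rho_init : initial_segment G rho := proj1 (proj2 (proj2 Hv)).
Let Delta_cs : convex_subgroup G Delta := ig_convex_subgroup HG rho rho_init.

(* KVH2 with z = 0 ∈ x − x: for x ≠ 0, x − x = {t | vt > ρ + vx}. *)
Lemma sub_self_char x g : v x = Some g ->
  forall t, hadd F x (hneg F x) t <-> above_seg G rho (v t) g.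
Proof.
  intros hg t. pose proof Hv as (_ & _ & _ & _ & HK2).
  assert (hm : omin G (v x) (v (hneg F x)) = Some g).
  { rewrite (val_neg HF HG v_val), hg. apply omin_same. }
  rewrite (HK2 x (hneg F x) (hzero F) t (or_introl (val_Some_nz v_val _ _ hg)) (h_inv HF x) g hm).
  split.
  - intro h. rewrite <- (val_neg HF HG v_val t). apply h, (h_zero_l HF). reflexivity.
  - intros h s hs. apply (h_zero_l HF) in hs. subst. rewrite (val_neg HF HG v_val). exact h.
Qed.

Lemma O_w_char x g : v x = Some g ->
  (ole H (Some (gzero H)) (w x) <-> sub_stable rho g).
Proof.
  intro hg. rewrite HOw.
  pose proof (val_one HF HG v_val) as v1.
  split.
  - intros h c hc. apply NNPP; intro hn.
    destruct (val_surj v_val (Some c)) as [t ht].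
    assert (ht' : hadd F x (hneg F x) t).
    { rewrite (sub_self_char x g hg), ht. simpl. rewrite (seg_shift_iff HG). exact hn. }
    specialize (h t ht'). rewrite (sub_self_char _ _ v1), ht in h. simpl in h.
    rewrite (seg_shift_iff HG), (sub0 HG) in h. exact (h hc).
  - intros hq s hs. rewrite (sub_self_char x g hg) in hs. rewrite (sub_self_char _ _ v1).
    destruct (v s) as [a|]; [|exact hs]. simpl in *. rewrite (seg_shift_iff HG) in *.
    rewrite (sub0 HG). intro hr. apply hs, hq, hr.
Qed.

(* w y ≤ w x  iff  x/y ∈ O_w  iff  ρ − (vx − vy) ⊆ ρ. *)
Lemma w_le_iff x y a b : v x = Some a -> v y = Some b ->
  (ole H (w y) (w x) <-> sub_stable rho (a ⊕ ⊝b)).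
Proof.
  intros ha hb.
  destruct (m_inv HF y (val_Some_nz v_val _ _ hb)) as [y' hy'].
  assert (vq : v (hmul F x y') = Some (a ⊕ ⊝b)).
  { rewrite (val_mul v_val), ha, (val_inv HF HG v_val y y' b hb hy'). reflexivity. }
  rewrite <- (O_w_char _ _ vq).
  destruct (val_Some Hw x (val_Some_nz v_val _ _ ha)) as [p hp].
  destruct (val_Some Hw y (val_Some_nz v_val _ _ hb)) as [q hq].
  rewrite (val_mul Hw), hp, (val_inv HF HH Hw y y' q hq hy'), hq. apply (ole_sub HH).
Qed.

Lemma w_eq_iff x y a b : v x = Some a -> v y = Some b -> (w x = w y <-> cong Delta a b).
Proof.
  intros ha hb. unfold cong. rewrite (ig_sub_stable HG), (opp_sub HG),
    <- (w_le_iff _ _ _ _ ha hb), <- (w_le_iff _ _ _ _ hb ha).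
  split.
  - intros ->. split; right; reflexivity.
  - intros [h1 h2]. exact (ole_antisym HH _ _ h2 h1).
Qed.

(* The isomorphism σ : wF → vF/ig(ρ), sending w x to v x + ig(ρ). *)
Definition w_witness (h : car H) : hcar F :=
  proj1_sig (constructive_indefinite_description _ (val_surj Hw (Some h))).

Lemma w_witness_spec h : w (w_witness h) = Some h.
Proof. exact (proj2_sig (constructive_indefinite_description _ (val_surj Hw (Some h)))). Qed.

Definition sigma (h : car H) : car Q :=
  match v (w_witness h) with Some g => qmk g | None => qmk z0 end.

Lemma sigma_spec x h g : w x = Some h -> v x = Some g -> sigma h = qmk g.
Proof.
  intros hw hv. pose proof (w_witness_spec h) as hx. unfold sigma.
  destruct (val_Some v_val _ (val_Some_nz Hw _ _ hx)) as [g0 hg0]. rewrite hg0.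
  apply (qmk_eq HG Delta_cs), (w_eq_iff _ _ _ _ hg0 hv). congruence.
Qed.

Lemma w_value_lift h : exists x a, w x = Some h /\ v x = Some a.
Proof.
  destruct (val_surj Hw (Some h)) as [x hx].
  destruct (val_Some v_val x (val_Some_nz Hw _ _ hx)) as [a ha]. eauto.
Qed.

Lemma w_equiv_coarsening : val_equiv F H Q w vD.
Proof.
  exists sigma. split; [|split; [|split; [|split]]].
  - intros h1 h2 e.
    destruct (w_value_lift h1) as (x1 & a1 & w1 & v1), (w_value_lift h2) as (x2 & a2 & w2 & v2).
    rewrite (sigma_spec _ _ _ w1 v1), (sigma_spec _ _ _ w2 v2), (qmk_eq HG Delta_cs) in e.
    apply (w_eq_iff _ _ _ _ v1 v2) in e. congruence.
  - intro c. destruct (val_surj v_val (Some (qrep G Delta c))) as [x hx].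
    destruct (val_Some Hw x (val_Some_nz v_val _ _ hx)) as [h hh].
    exists h. rewrite (sigma_spec _ _ _ hh hx). apply qmk_qrep.
  - intros h1 h2.
    destruct (w_value_lift h1) as (x1 & a1 & w1 & v1), (w_value_lift h2) as (x2 & a2 & w2 & v2).
    assert (wm : w (hmul F x1 x2) = Some (gadd H h1 h2)) by (rewrite (val_mul Hw), w1, w2; reflexivity).
    assert (vm : v (hmul F x1 x2) = Some (a1 ⊕ a2)) by (rewrite (val_mul v_val), v1, v2; reflexivity).
    rewrite (sigma_spec _ _ _ wm vm), (sigma_spec _ _ _ w1 v1), (sigma_spec _ _ _ w2 v2).
    symmetry; apply (qadd_qmk HG Delta_cs).
  - intros h1 h2.
    destruct (w_value_lift h1) as (x1 & a1 & w1 & v1), (w_value_lift h2) as (x2 & a2 & w2 & v2).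
    rewrite (sigma_spec _ _ _ w1 v1), (sigma_spec _ _ _ w2 v2), (qlt_qmk HG Delta_cs),
      (ig_lt_iff HG rho rho_init), <- (w_le_iff _ _ _ _ v1 v2), w1, w2.
    apply (lt_iff_not_ole HH).
  - intro x. unfold coarsening. destruct (v x) as [a|] eqn:ha.
    + destruct (val_Some Hw x (val_Some_nz v_val _ _ ha)) as [h hh].
      rewrite hh. simpl. f_equal. symmetry. exact (sigma_spec x h a hh ha).
    + apply (val_None v_val) in ha. subst. rewrite (val0 Hw). reflexivity.
Qed.

Lemma coarsening_krasner : krasner_valuation F Q vD.
Proof.
  pose proof Hv as (_ & HK1 & HKn).
  split; [exact (coarsening_valuation HG Delta_cs v_val)|].
  split; [exact (coarsening_KVH1 HK1)|].
  exists (quot_seg Delta rho).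
  exact (coarsening_krasner_norm HG Delta_cs rho (ig_rho_cong HG rho) HKn).
Qed.
End Comparison.

Theorem theorem6p2
  (F : hyperfield) (HF : is_hyperfield F)
  (G : oag) (HG : is_oag G)
  (v : hcar F -> option (car G)) (rho : car G -> Prop)
  (Hv : krasner_valuation_with_norm F G v rho)
  (H : oag) (HH : is_oag H)
  (w : hcar F -> option (car H)) (Hw : valuation F H w)
  (HOw : forall x : hcar F,
      ole H (Some (gzero H)) (w x) <->
      (forall s, hadd F x (hneg F x) s -> hadd F (hone F) (hneg F (hone F)) s)) :
  val_equiv F H (quot_oag G (ig G rho)) w (coarsening F G (ig G rho) v) /\
  krasner_valuation F (quot_oag G (ig G rho)) (coarsening F G (ig G rho) v).
Proof.
  split.
  - exact (w_equiv_coarsening F HF G HG v rho Hv H HH w Hw HOw).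
  - exact (coarsening_krasner F G HG v rho Hv).
Qed.
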